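(* Let $v_1,\ldots,v_n$ be a matching ordering of a tournament $G$. If $v$ is a vertex of $G$ with indegree $b$, then $v$ is one of $v_b$, $v_{b+1}$, $v_{b+2}$. Moreover, $v=v_b$ if and only if $v$ is the head of a backedge, $v=v_{b+2}$ if and only if $v$ is the tail of a backedge, and $v=v_{b+1}$ if and only if $v$ is not an end of any backedge.
   Context: A tournament is a finite, non-null, loopless directed graph in which for any two distinct vertices $u,v$ there is exactly one edge with both ends in $\{u,v\}$. The indegree of $v$ is the number of vertices $u$ with an edge from $u$ to $v$. Given an ordering $v_1,\dots,v_n$ of the vertices, a backedge is an edge from $v_j$ to $v_i$ with $j>i$ (tail $v_j$, head $v_i$); the ordering is a matching ordering if every vertex is the head or tail of at most one backedge. *)

From mathcomp Require Import all_boot.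
Set Implicit Arguments. Unset Strict Implicit. Unset Printing Implicit Defensive.

(* A directed graph on a finite vertex type V is given by its edge relation:
   e u v means there is an edge from u to v. *)

Definition tournament (V : finType) (e : rel V) : Prop :=
  0 < #|V| /\ (forall v, ~~ e v v) /\ (forall u v, u != v -> e u v != e v u).

Definition indegree (V : finType) (e : rel V) (v : V) : nat :=
  #|[set u | e u v]|.

(* Ordering v_1,...,v_n represented by vs : 'I_n -> V (bijective),
   with v_(i+1) = vs i (0-based index i).
   backedge vs e i j : there is a backedge with head vs i and tail vs j,
   i.e. i < j and an edge from vs j to vs i. *)
Definition backedge (V : finType) (e : rel V) (n : nat) (vs : 'I_n -> V)
  (i j : 'I_n) : bool := (i < j) && e (vs j) (vs i).

Definition matching_ordering (V : finType) (e : rel V) (n : nat)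
  (vs : 'I_n -> V) : Prop :=
  forall i : 'I_n,
    #|[set j : 'I_n | backedge e vs i j || backedge e vs j i]| <= 1.

(** Number the vertices [v_1, ..., v_n] and let [h] and [t] count the backedges
    with head, resp. tail, [v_k].  By the tournament property every earlier
    vertex is either an in-neighbour of [v_k] or the head of a backedge with
    tail [v_k], and every later in-neighbour is the tail of a backedge with
    head [v_k]; hence [indeg v_k + t = (k - 1) + h].  In a matching ordering
    [h + t <= 1], which leaves exactly the three cases of the statement. *)

From mathcomp Require Import all_boot zify.

Set Implicit Arguments.
Unset Strict Implicit.
Unset Printing Implicit Defensive.

Lemma card_set_sum (T : finType) (P : pred T) :
  #|[set x | P x]| = \sum_x (P x : nat).
Proof.
by rewrite -sum1dep_card big_mkcond; apply: eq_bigr => x _; case: (P x).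
Qed.

Lemma card_ord_lt n k : k <= n -> #|[set j : 'I_n | j < k]| = k.
Proof.
by move=> le_kn; rewrite -sum1dep_card (big_ord_narrow le_kn) sum1_card card_ord.
Qed.

Lemma existsb_card_gt0 (T : finType) (P : pred T) :
  [exists x, P x] = (0 < #|[set x | P x]|).
Proof.
by apply/existsP/card_gt0P => -[x Px]; exists x; rewrite ?inE in Px *.
Qed.

Section BackedgeCount.

Variables (V : finType) (e : rel V) (n : nat) (vs : 'I_n -> V).

Lemma backedge_asym i j : backedge e vs i j -> ~~ backedge e vs j i.
Proof. by rewrite /backedge => /andP[lt_ij _]; rewrite ltnNge ltnW. Qed.

Lemma card_backedge_ends k :
  #|[set j | backedge e vs k j || backedge e vs j k]|
  = #|[set j | backedge e vs k j]| + #|[set j | backedge e vs j k]|.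
Proof.
rewrite !card_set_sum -big_split; apply: eq_bigr => j _ /=.
by case: (boolP (backedge e vs k j)) => [/backedge_asym/negbTE -> | _].
Qed.

Hypotheses (e_tour : tournament e) (vs_bij : bijective vs).

Lemma indegree_ordering k :
  indegree e (vs k) = #|[set j | e (vs j) (vs k)]|.
Proof.
have [g _ gK] := vs_bij.
rewrite /indegree -(card_imset _ (bij_inj vs_bij)); apply: eq_card => u.
rewrite inE; apply/idP/imsetP => [in_u | [j]].
  by exists (g u); rewrite ?inE gK.
by rewrite inE => in_j ->.
Qed.

Lemma in_edge_backedge j k :
  e (vs j) (vs k) + backedge e vs j k = (j < k) + backedge e vs k j.
Proof.
have [_ [e_irr e_tot]] := e_tour.
rewrite /backedge; case: (ltngtP j k) => [lt_jk | _ | /val_inj ->] /=.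
- have ne_jk : vs j != vs k.
    by apply: contraTneq lt_jk => /(bij_inj vs_bij) ->; rewrite ltnn.
  by move: (e_tot _ _ ne_jk); case: (e (vs j) (vs k)); case: (e (vs k) (vs j)).
- by rewrite !addn0.
- by rewrite (negbTE (e_irr _)).
Qed.

Lemma indegree_backedge k :
  indegree e (vs k) + #|[set j | backedge e vs j k]|
  = k + #|[set j | backedge e vs k j]|.
Proof.
rewrite indegree_ordering -(card_ord_lt (ltnW (ltn_ord k))) !card_set_sum.
by rewrite -!big_split; apply: eq_bigr => j _; apply: in_edge_backedge.
Qed.

End BackedgeCount.

Lemma matching_position (b k h t : nat) : h + t <= 1 -> b + t = k + h ->
  [/\ k.+1 \in [:: b; b.+1; b.+2],
      (k.+1 == b) = (0 < h),
      (k.+1 == b.+2) = (0 < t)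
    & (k.+1 == b.+1) = ~~ (0 < h + t)].
Proof.
rewrite !inE; case: h t => [|[|h]] [|[|t]] //= _ hbk; split; lia.
Qed.

(* Vertex v = vs k is v_(k+1) in the paper's 1-based numbering. *)
Theorem proposition5p1 (V : finType) (e : rel V) (n : nat) (vs : 'I_n -> V)
  (hT : tournament e) (hbij : bijective vs) (hM : matching_ordering e vs)
  (v : V) (k : 'I_n) (hk : vs k = v) :
  let b := indegree e v in
  [/\ k.+1 \in [:: b; b.+1; b.+2],
      (k.+1 == b) = [exists j : 'I_n, backedge e vs k j],
      (k.+1 == b.+2) = [exists j : 'I_n, backedge e vs j k]
    & (k.+1 == b.+1) = ~~ [exists j : 'I_n, backedge e vs k j || backedge e vs j k]].
Proof.
subst v; rewrite /= !existsb_card_gt0 card_backedge_ends.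
apply: (matching_position _ (indegree_backedge hT hbij k)).
by rewrite -card_backedge_ends; apply: hM.
Qed.
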